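(* Let $S$ be a Stone relation algebra with at least one additional hypothesis, namely that $S$ satisfies the point axiom: the set $\mathrm{IP}(S)$ of ideal-points of $S$ is finite and non-empty and $\top = \bigsqcup \mathrm{IP}(S)$. Let $\mathrm{I}(S)$ be the set of ideals of $S$ and $\mathrm{M}(S) = \mathrm{I}(S)^{\mathrm{IP}(S)\times\mathrm{IP}(S)}$ the set of matrices indexed by $\mathrm{IP}(S)$ with entries in $\mathrm{I}(S)$. Then: (1) $\mathrm{M}(S)$ is a Stone relation algebra, where $\sqcup$, $\sqcap$, the pseudocomplement, $\bot$ and $\top$ are lifted componentwise from $\mathrm{I}(S)$, and composition, converse and identity are given by $(XY)_{p,q} = \bigsqcup\{X_{p,r}\sqcap Y_{r,q} \mid r\in\mathrm{IP}(S)\}$, $(X^{\smile})_{p,q} = X_{q,p}$, and $1_{p,q} = \top$ if $p=q$ and $1_{p,q}=\bot$ if $p\neq q$. (2) The functions $f : S\to\mathrm{M}(S)$, $f(x)_{p,q} = p^{\smile} x q$, and $g : \mathrm{M}(S)\to S$, $g(X) = \bigsqcup\{p\, X_{p,q}\, q^{\smile} \mid p,q\in\mathrm{IP}(S)\}$, are isomorphisms (of Stone relation algebras) between $S$ and $\mathrm{M}(S)$.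
   Context: A Stone relation algebra is a structure $(S,\sqcup,\sqcap,\cdot,\overline{\,\cdot\,},{}^{\smile},\bot,\top,1)$ (write $xy$ for $x\cdot y$, $\overline{x}$ for the pseudocomplement, $x^{\smile}$ for the converse) such that: $(S,\sqcup,\sqcap,\bot,\top)$ is a bounded distributive lattice with order $x\sqsubseteq y\iff x\sqcup y=y$; $x\sqcap y=\bot\iff x\sqsubseteq\overline{y}$ for all $x,y$; $\overline{x}\sqcup\overline{\overline{x}}=\top$; $\cdot$ is associative with two-sided unit $1$, distributes over $\sqcup$ on both sides, and $\bot$ is a zero of $\cdot$; $x^{\smile\smile}=x$, $(xy)^{\smile}=y^{\smile}x^{\smile}$, $(x\sqcup y)^{\smile}=x^{\smile}\sqcup y^{\smile}$; $\overline{\overline{1}}=1$; $\overline{\overline{xy}}=\overline{\overline{x}}\,\overline{\overline{y}}$; and $xy\sqcap z\sqsubseteq x(y\sqcap x^{\smile}z)$ for all $x,y,z$. For finite non-empty $P\subseteq S$, $\bigsqcup P$ is the join of its elements. An element $x$ is injective if $xx^{\smile}\sqsubseteq 1$, surjective if $1\sqsubseteq x^{\smile}x$, bijective if injective and surjective, a vector if $x\top=x$, a covector if $\top x=x$, a point if it is a bijective vector, and an ideal if it is both a vector and a covector. An ideal-point is a point $p$ such that for all points $q$ and all ideals $x\neq\bot$, $qx\sqsubseteq p$ implies $q\sqsubseteq p$. *)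

From Stdlib Require Import List ClassicalEpsilon.
Import ListNotations.
Set Implicit Arguments.

(** With [P := fun _ => True] this is exactly the paper's definition. *)
Record StoneRA_on (T : Type) (P : T -> Prop)
  (join meet comp : T -> T -> T) (pc conv : T -> T) (bot top one : T) : Prop := {
  cl_join : forall x y, P x -> P y -> P (join x y);
  cl_meet : forall x y, P x -> P y -> P (meet x y);
  cl_comp : forall x y, P x -> P y -> P (comp x y);
  cl_pc : forall x, P x -> P (pc x);
  cl_conv : forall x, P x -> P (conv x);
  cl_bot : P bot;
  cl_top : P top;
  cl_one : P one;
  join_assoc : forall x y z, P x -> P y -> P z -> join x (join y z) = join (join x y) z;
  meet_assoc : forall x y z, P x -> P y -> P z -> meet x (meet y z) = meet (meet x y) z;
  join_comm : forall x y, P x -> P y -> join x y = join y x;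
  meet_comm : forall x y, P x -> P y -> meet x y = meet y x;
  join_meet_absorb : forall x y, P x -> P y -> join x (meet x y) = x;
  meet_join_absorb : forall x y, P x -> P y -> meet x (join x y) = x;
  meet_join_distr : forall x y z, P x -> P y -> P z ->
      meet x (join y z) = join (meet x y) (meet x z);
  join_bot : forall x, P x -> join bot x = x;
  meet_top : forall x, P x -> meet top x = x;
  (* pseudocomplement (order: x <= y iff join x y = y) *)
  pc_spec : forall x y, P x -> P y -> (meet x y = bot <-> join x (pc y) = pc y);
  stone : forall x, P x -> join (pc x) (pc (pc x)) = top;
  comp_assoc : forall x y z, P x -> P y -> P z -> comp x (comp y z) = comp (comp x y) z;
  comp_one_l : forall x, P x -> comp one x = x;
  comp_one_r : forall x, P x -> comp x one = x;
  comp_join_distr_l : forall x y z, P x -> P y -> P z ->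
      comp x (join y z) = join (comp x y) (comp x z);
  comp_join_distr_r : forall x y z, P x -> P y -> P z ->
      comp (join x y) z = join (comp x z) (comp y z);
  comp_bot_l : forall x, P x -> comp bot x = bot;
  comp_bot_r : forall x, P x -> comp x bot = bot;
  conv_invol : forall x, P x -> conv (conv x) = x;
  conv_comp : forall x y, P x -> P y -> conv (comp x y) = comp (conv y) (conv x);
  conv_join : forall x y, P x -> P y -> conv (join x y) = join (conv x) (conv y);
  pc_pc_one : pc (pc one) = one;
  pc_pc_comp : forall x y, P x -> P y -> pc (pc (comp x y)) = comp (pc (pc x)) (pc (pc y));
  dedekind : forall x y z, P x -> P y -> P z ->
      join (meet (comp x y) z) (comp x (meet y (comp (conv x) z)))
      = comp x (meet y (comp (conv x) z))
}.

Record StoneRA := {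
  carrier :> Type;
  sjoin : carrier -> carrier -> carrier;
  smeet : carrier -> carrier -> carrier;
  scomp : carrier -> carrier -> carrier;
  spc : carrier -> carrier;
  sconv : carrier -> carrier;
  sbot : carrier;
  stop : carrier;
  sone : carrier;
  s_axioms : StoneRA_on (fun _ : carrier => True) sjoin smeet scomp spc sconv sbot stop sone
}.

Definition bigjoin (T : Type) (join : T -> T -> T) (bot : T) (l : list T) : T :=
  fold_right join bot l.

Section Elements.
Variable S : StoneRA.

Definition sle (x y : S) : Prop := sjoin S x y = y.
Definition injective_el (x : S) : Prop := sle (scomp S x (sconv S x)) (sone S).
Definition surjective_el (x : S) : Prop := sle (sone S) (scomp S (sconv S x) x).
Definition bijective_el (x : S) : Prop := injective_el x /\ surjective_el x.
Definition vector (x : S) : Prop := scomp S x (stop S) = x.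
Definition covector (x : S) : Prop := scomp S (stop S) x = x.
Definition point (x : S) : Prop := bijective_el x /\ vector x.
Definition ideal (x : S) : Prop := vector x /\ covector x.
Definition ideal_point (p : S) : Prop :=
  point p /\
  forall q x : S, point q -> ideal x -> x <> sbot S ->
    sle (scomp S q x) p -> sle q p.

Definition IPt : Type := { p : S | ideal_point p }.

Definition Mat : Type := IPt -> IPt -> S.
Definition in_M (X : Mat) : Prop := forall p q, ideal (X p q).

Definition Mjoin (X Y : Mat) : Mat := fun p q => sjoin S (X p q) (Y p q).
Definition Mmeet (X Y : Mat) : Mat := fun p q => smeet S (X p q) (Y p q).
Definition Mpc (X : Mat) : Mat := fun p q => spc S (X p q).
Definition Mbot : Mat := fun _ _ => sbot S.
Definition Mtop : Mat := fun _ _ => stop S.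
(** [l] is an enumeration of IP(S). *)
Definition Mcomp (l : list IPt) (X Y : Mat) : Mat :=
  fun p q => bigjoin (sjoin S) (sbot S) (map (fun r => smeet S (X p r) (Y r q)) l).
Definition Mconv (X : Mat) : Mat := fun p q => X q p.
Definition Mone : Mat :=
  fun p q => if excluded_middle_informative (p = q) then stop S else sbot S.

Definition fmat (x : S) : Mat :=
  fun p q => scomp S (scomp S (sconv S (proj1_sig p)) x) (proj1_sig q).
Definition gmat (l : list IPt) (X : Mat) : S :=
  bigjoin (sjoin S) (sbot S)
    (map (fun pq => scomp S (scomp S (proj1_sig (fst pq)) (X (fst pq) (snd pq)))
                           (sconv S (proj1_sig (snd pq))))
         (list_prod l l)).

End Elements.

Definition StoneRA_hom (T U : Type) (P : T -> Prop)
  (join1 meet1 comp1 : T -> T -> T) (pc1 conv1 : T -> T) (bot1 top1 one1 : T)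
  (join2 meet2 comp2 : U -> U -> U) (pc2 conv2 : U -> U) (bot2 top2 one2 : U)
  (h : T -> U) : Prop :=
  (forall x y, P x -> P y -> h (join1 x y) = join2 (h x) (h y)) /\
  (forall x y, P x -> P y -> h (meet1 x y) = meet2 (h x) (h y)) /\
  (forall x y, P x -> P y -> h (comp1 x y) = comp2 (h x) (h y)) /\
  (forall x, P x -> h (pc1 x) = pc2 (h x)) /\
  (forall x, P x -> h (conv1 x) = conv2 (h x)) /\
  h bot1 = bot2 /\ h top1 = top2 /\ h one1 = one2.

(* Distinct ideal-points p, q are orthogonal, p˘q = ⊥: otherwise p˘q is a non-zero ideal with
   p (p˘q) ⊑ q, so p ⊑ q, and comparable points are equal. With ⊤ = ⊔ IP(S) and the Dedekind law
   the ideal-points form a partition of identity, ⊔ p p˘ = 1. Inserting it around x gives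
   g (f x) = x; orthogonality and p˘p = ⊤ give f (g X) = X for X with ideal entries; inserting it
   between x and y gives f (x y) = f x · f y, as meet and composition agree on ideals. Meets are
   preserved entrywise because p˘ is univalent and q injective, and pseudocomplements because f is
   an order isomorphism. Hence f is a bijection S → M(S) preserving all operations, and M(S)
   inherits the axioms of S by transport along it. *)

From Stdlib Require Import List ClassicalEpsilon ProofIrrelevance FunctionalExtensionality.
Import ListNotations.
Set Implicit Arguments.
Unset Strict Implicit.

Section Transport.
Variables (T U : Type).
Variables (join1 meet1 comp1 : T -> T -> T) (pc1 conv1 : T -> T) (bot1 top1 one1 : T).
Variables (join2 meet2 comp2 : U -> U -> U) (pc2 conv2 : U -> U) (bot2 top2 one2 : U).
Variables (P : U -> Prop) (h : T -> U) (g : U -> T).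
Hypothesis h_hom : StoneRA_hom (fun _ => True)
  join1 meet1 comp1 pc1 conv1 bot1 top1 one1 join2 meet2 comp2 pc2 conv2 bot2 top2 one2 h.
Hypothesis gK : forall x, g (h x) = x.
Hypothesis hK : forall y, P y -> h (g y) = y.

(* Writes every [y] with [P y] as [h x] and folds the operations of [U] back into [h]. *)
Local Ltac pull_back :=
  destruct h_hom as (hjoin & hmeet & hcomp & hpc & hconv & hbot & htop & hone);
  repeat match goal with Hy : P ?y |- _ =>
    let E := fresh in
    pose proof (hK Hy) as E; clear Hy; revert E; generalize (g y); intros ? E; subst y end;
  repeat rewrite <- ?hjoin, <- ?hmeet, <- ?hcomp, <- ?hpc, <- ?hconv, <- ?hbot, <- ?htop, <- ?hone
    by exact I.

Lemma StoneRA_hom_inverse : StoneRA_hom P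
  join2 meet2 comp2 pc2 conv2 bot2 top2 one2 join1 meet1 comp1 pc1 conv1 bot1 top1 one1 g.
Proof.
  repeat split; intros; pull_back; apply gK.
Qed.

Hypothesis h_in : forall x, P (h x).

Lemma StoneRA_on_image :
  StoneRA_on (fun _ => True) join1 meet1 comp1 pc1 conv1 bot1 top1 one1 ->
  StoneRA_on P join2 meet2 comp2 pc2 conv2 bot2 top2 one2.
Proof.
  assert (h_inj : forall x y, h x = h y -> x = y).
  { intros x y E. rewrite <- (gK x), <- (gK y), E. reflexivity. }
  intro A; constructor; intros; pull_back; try apply h_in.
  all: try (split; intro E; apply h_inj in E; f_equal; apply (pc_spec A); trivial).
  all: f_equal; destruct A; auto.
Qed.
End Transport.

Section StoneRelationAlgebra.
Variable S : StoneRA.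
Local Infix "⊔" := (sjoin S) (at level 50, left associativity).
Local Infix "⊓" := (smeet S) (at level 40, left associativity).
Local Infix "⋅" := (scomp S) (at level 31, left associativity).
Local Notation cv := (sconv S).
Local Notation pc := (spc S).
Local Notation bot := (sbot S).
Local Notation top := (stop S).
Local Notation one := (sone S).
Local Notation "x ⊑ y" := (@sle S x y) (at level 70).
Local Notation ax := (s_axioms S).
Local Notation bigjoinS := (bigjoin (sjoin S) (sbot S)).

Lemma sjoinA (x y z : S) : x ⊔ (y ⊔ z) = x ⊔ y ⊔ z.
Proof. exact (join_assoc ax x y z I I I). Qed.
Lemma smeetA (x y z : S) : x ⊓ (y ⊓ z) = x ⊓ y ⊓ z.
Proof. exact (meet_assoc ax x y z I I I). Qed.
Lemma sjoinC (x y : S) : x ⊔ y = y ⊔ x.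
Proof. exact (join_comm ax x y I I). Qed.
Lemma smeetC (x y : S) : x ⊓ y = y ⊓ x.
Proof. exact (meet_comm ax x y I I). Qed.
Lemma sjoin_meet_absorb (x y : S) : x ⊔ (x ⊓ y) = x.
Proof. exact (join_meet_absorb ax x y I I). Qed.
Lemma smeet_join_absorb (x y : S) : x ⊓ (x ⊔ y) = x.
Proof. exact (meet_join_absorb ax x y I I). Qed.
Lemma smeet_joinDr (x y z : S) : x ⊓ (y ⊔ z) = x ⊓ y ⊔ x ⊓ z.
Proof. exact (meet_join_distr ax x y z I I I). Qed.
Lemma sjoin_botl (x : S) : bot ⊔ x = x.
Proof. exact (join_bot ax x I). Qed.
Lemma smeet_topl (x : S) : top ⊓ x = x.
Proof. exact (meet_top ax x I). Qed.
Lemma spcP (x y : S) : x ⊓ y = bot <-> x ⊑ pc y.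
Proof. exact (pc_spec ax x y I I). Qed.
Lemma scompA (x y z : S) : x ⋅ (y ⋅ z) = x ⋅ y ⋅ z.
Proof. exact (comp_assoc ax x y z I I I). Qed.
Lemma scomp_onel (x : S) : one ⋅ x = x.
Proof. exact (comp_one_l ax x I). Qed.
Lemma scomp_oner (x : S) : x ⋅ one = x.
Proof. exact (comp_one_r ax x I). Qed.
Lemma scomp_joinDl (x y z : S) : x ⋅ (y ⊔ z) = x ⋅ y ⊔ x ⋅ z.
Proof. exact (comp_join_distr_l ax x y z I I I). Qed.
Lemma scomp_joinDr (x y z : S) : (x ⊔ y) ⋅ z = x ⋅ z ⊔ y ⋅ z.
Proof. exact (comp_join_distr_r ax x y z I I I). Qed.
Lemma scomp_botl (x : S) : bot ⋅ x = bot.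
Proof. exact (comp_bot_l ax x I). Qed.
Lemma scomp_botr (x : S) : x ⋅ bot = bot.
Proof. exact (comp_bot_r ax x I). Qed.
Lemma sconvK (x : S) : cv (cv x) = x.
Proof. exact (conv_invol ax x I). Qed.
Lemma sconv_comp (x y : S) : cv (x ⋅ y) = cv y ⋅ cv x.
Proof. exact (conv_comp ax x y I I). Qed.
Lemma sconv_join (x y : S) : cv (x ⊔ y) = cv x ⊔ cv y.
Proof. exact (conv_join ax x y I I). Qed.
Lemma dedekind_l (x y z : S) : x ⋅ y ⊓ z ⊑ x ⋅ (y ⊓ cv x ⋅ z).
Proof. exact (dedekind ax x y z I I I). Qed.

Lemma sjoin_id (x : S) : x ⊔ x = x.
Proof. rewrite <- (smeet_join_absorb x x) at 2. apply sjoin_meet_absorb. Qed.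

Lemma smeet_id (x : S) : x ⊓ x = x.
Proof. rewrite <- (sjoin_meet_absorb x x) at 2. apply smeet_join_absorb. Qed.

Lemma sle_refl (x : S) : x ⊑ x.
Proof. apply sjoin_id. Qed.

Lemma sle_trans (x y z : S) : x ⊑ y -> y ⊑ z -> x ⊑ z.
Proof. unfold sle; intros Hxy Hyz. rewrite <- Hyz, sjoinA, Hxy. reflexivity. Qed.

Lemma sle_antisym (x y : S) : x ⊑ y -> y ⊑ x -> x = y.
Proof. unfold sle; intros Hxy Hyx. rewrite <- Hyx, sjoinC. exact Hxy. Qed.

Lemma sleEmeet (x y : S) : x ⊑ y <-> x ⊓ y = x.
Proof.
  unfold sle; split; intro H.
  - rewrite <- H. apply smeet_join_absorb.
  - rewrite <- H, sjoinC, smeetC. apply sjoin_meet_absorb.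
Qed.

Lemma sjoin_ubl (x y : S) : x ⊑ x ⊔ y.
Proof. unfold sle. rewrite sjoinA, sjoin_id. reflexivity. Qed.

Lemma sjoin_ubr (x y : S) : y ⊑ x ⊔ y.
Proof. rewrite sjoinC. apply sjoin_ubl. Qed.

Lemma sjoin_lub (x y z : S) : x ⊑ z -> y ⊑ z -> x ⊔ y ⊑ z.
Proof. unfold sle; intros Hx Hy. rewrite <- sjoinA, Hy. exact Hx. Qed.

Lemma smeet_lbl (x y : S) : x ⊓ y ⊑ x.
Proof. apply sleEmeet. rewrite (smeetC (x ⊓ y) x), smeetA, smeet_id. reflexivity. Qed.

Lemma smeet_lbr (x y : S) : x ⊓ y ⊑ y.
Proof. rewrite smeetC. apply smeet_lbl. Qed.

Lemma smeet_glb (x y z : S) : z ⊑ x -> z ⊑ y -> z ⊑ x ⊓ y.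
Proof.
  rewrite !sleEmeet; intros Hx Hy. rewrite smeetA, Hx, Hy. reflexivity.
Qed.

Lemma sbot_le (x : S) : bot ⊑ x.
Proof. apply sjoin_botl. Qed.

Lemma sle_top (x : S) : x ⊑ top.
Proof. apply sleEmeet. rewrite smeetC. apply smeet_topl. Qed.

Lemma sle_bot (x : S) : x ⊑ bot -> x = bot.
Proof. intro H. apply sle_antisym; [exact H | apply sbot_le]. Qed.

Lemma sjoin_mono (x y x' y' : S) : x ⊑ x' -> y ⊑ y' -> x ⊔ y ⊑ x' ⊔ y'.
Proof.
  intros Hx Hy. apply sjoin_lub.
  - apply (sle_trans Hx), sjoin_ubl.
  - apply (sle_trans Hy), sjoin_ubr.
Qed.

Lemma smeet_mono (x y x' y' : S) : x ⊑ x' -> y ⊑ y' -> x ⊓ y ⊑ x' ⊓ y'.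
Proof.
  intros Hx Hy. apply smeet_glb.
  - apply (sle_trans (smeet_lbl x y)), Hx.
  - apply (sle_trans (smeet_lbr x y)), Hy.
Qed.

Lemma scomp_monol (x y z : S) : x ⊑ y -> x ⋅ z ⊑ y ⋅ z.
Proof. unfold sle; intro H. rewrite <- scomp_joinDr, H. reflexivity. Qed.

Lemma scomp_monor (x y z : S) : x ⊑ y -> z ⋅ x ⊑ z ⋅ y.
Proof. unfold sle; intro H. rewrite <- scomp_joinDl, H. reflexivity. Qed.

Lemma scomp_mono (x y x' y' : S) : x ⊑ x' -> y ⊑ y' -> x ⋅ y ⊑ x' ⋅ y'.
Proof. intros Hx Hy. apply (sle_trans (scomp_monol y Hx)), scomp_monor, Hy. Qed.

Lemma sconv_mono (x y : S) : x ⊑ y -> cv x ⊑ cv y.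
Proof. unfold sle; intro H. rewrite <- sconv_join, H. reflexivity. Qed.

Lemma sconv_top : cv top = top.
Proof.
  apply sle_antisym; [apply sle_top |].
  rewrite <- (sconvK top) at 1. apply sconv_mono, sle_top.
Qed.

Lemma sconv_meet (x y : S) : cv (x ⊓ y) = cv x ⊓ cv y.
Proof.
  assert (le_conv_meet : forall a b : S, cv (a ⊓ b) ⊑ cv a ⊓ cv b).
  { intros. apply smeet_glb; apply sconv_mono; [apply smeet_lbl | apply smeet_lbr]. }
  apply sle_antisym; [apply le_conv_meet |].
  rewrite <- (sconvK (cv x ⊓ cv y)). apply sconv_mono.
  rewrite <- (sconvK x) at 2. rewrite <- (sconvK y) at 2. apply le_conv_meet.
Qed.

Lemma dedekind_r (x y z : S) : y ⋅ x ⊓ z ⊑ (y ⊓ z ⋅ cv x) ⋅ x.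
Proof.
  pose proof (sconv_mono (dedekind_l (cv x) (cv y) (cv z))) as H.
  rewrite sconv_meet, !sconv_comp, !sconv_meet, !sconv_comp, !sconvK in H. exact H.
Qed.

Lemma sle_comp_conv_comp (x : S) : x ⊑ x ⋅ cv x ⋅ x.
Proof.
  pose proof (dedekind_l x one x) as H. rewrite scomp_oner, smeet_id in H.
  apply (sle_trans H). rewrite <- scompA. apply scomp_monor, smeet_lbr.
Qed.

Lemma scomp_top_top : top ⋅ top = top.
Proof.
  apply sle_antisym; [apply sle_top |].
  rewrite <- (scomp_oner top) at 1. apply scomp_monor, sle_top.
Qed.

Lemma scomp_meetDl_univalent (x y z : S) :
  cv x ⋅ x ⊑ one -> x ⋅ (y ⊓ z) = x ⋅ y ⊓ x ⋅ z.
Proof.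
  intro Hx. apply sle_antisym.
  - apply smeet_glb; apply scomp_monor; [apply smeet_lbl | apply smeet_lbr].
  - apply (sle_trans (dedekind_l x y (x ⋅ z))). apply scomp_monor, smeet_mono; [apply sle_refl |].
    rewrite scompA. rewrite <- (scomp_onel z) at 2. apply scomp_monol, Hx.
Qed.

Lemma scomp_meetDr_injective (x y z : S) :
  x ⋅ cv x ⊑ one -> (y ⊓ z) ⋅ x = y ⋅ x ⊓ z ⋅ x.
Proof.
  intro Hx. apply sle_antisym.
  - apply smeet_glb; apply scomp_monol; [apply smeet_lbl | apply smeet_lbr].
  - apply (sle_trans (dedekind_r x y (z ⋅ x))). apply scomp_monol, smeet_mono; [apply sle_refl |].
    rewrite <- scompA. rewrite <- (scomp_oner z) at 2. apply scomp_monor, Hx.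
Qed.

Lemma bigjoin_app (xs ys : list S) : bigjoinS (xs ++ ys) = bigjoinS xs ⊔ bigjoinS ys.
Proof.
  induction xs as [|x xs IH]; simpl.
  - rewrite sjoin_botl. reflexivity.
  - rewrite IH, sjoinA. reflexivity.
Qed.

Lemma scomp_bigjoinl {A} (a : S) (F : A -> S) (l : list A) :
  a ⋅ bigjoinS (map F l) = bigjoinS (map (fun r => a ⋅ F r) l).
Proof.
  induction l as [|r l IH]; simpl; [apply scomp_botr |].
  rewrite scomp_joinDl, IH. reflexivity.
Qed.

Lemma scomp_bigjoinr {A} (a : S) (F : A -> S) (l : list A) :
  bigjoinS (map F l) ⋅ a = bigjoinS (map (fun r => F r ⋅ a) l).
Proof.
  induction l as [|r l IH]; simpl; [apply scomp_botl |].
  rewrite scomp_joinDr, IH. reflexivity.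
Qed.

Lemma smeet_bigjoinl {A} (a : S) (F : A -> S) (l : list A) :
  a ⊓ bigjoinS (map F l) = bigjoinS (map (fun r => a ⊓ F r) l).
Proof.
  induction l as [|r l IH]; simpl.
  - apply sle_bot, smeet_lbr.
  - rewrite smeet_joinDr, IH. reflexivity.
Qed.

Lemma bigjoin_ub {A} (F : A -> S) (l : list A) (r : A) : In r l -> F r ⊑ bigjoinS (map F l).
Proof.
  induction l as [|r' l IH]; simpl; [contradiction |].
  intros [<- | Hr]; [apply sjoin_ubl |].
  apply (sle_trans (IH Hr)), sjoin_ubr.
Qed.

Lemma bigjoin_lub {A} (F : A -> S) (l : list A) (z : S) :
  (forall r, In r l -> F r ⊑ z) -> bigjoinS (map F l) ⊑ z.
Proof.
  induction l as [|r l IH]; simpl; intro H; [apply sbot_le |].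
  apply sjoin_lub; [apply H; left; reflexivity |].
  apply IH. intros r' Hr'. apply H; right; exact Hr'.
Qed.

Lemma bigjoin_mono {A} (F G : A -> S) (l : list A) :
  (forall r, F r ⊑ G r) -> bigjoinS (map F l) ⊑ bigjoinS (map G l).
Proof.
  intro H. induction l as [|r l IH]; simpl; [apply sle_refl |].
  apply sjoin_mono; [apply H | exact IH].
Qed.

Lemma bigjoin_list_prod {A B} (G : A * B -> S) (l1 : list A) (l2 : list B) :
  bigjoinS (map G (list_prod l1 l2))
  = bigjoinS (map (fun a => bigjoinS (map (fun b => G (a, b)) l2)) l1).
Proof.
  induction l1 as [|a l1 IH]; simpl; [reflexivity |].
  rewrite map_app, bigjoin_app, map_map, IH. reflexivity.
Qed.

Lemma ideal_sconv (a : S) : ideal S a -> ideal S (cv a).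
Proof.
  intros [Hv Hc]. split; unfold vector, covector.
  - rewrite <- sconv_top, <- sconv_comp, Hc. reflexivity.
  - rewrite <- sconv_top, <- sconv_comp, Hv. reflexivity.
Qed.

Lemma ideal_le_sconv (a : S) : ideal S a -> a ⊑ cv a.
Proof.
  intros [Hv Hc]. unfold vector, covector in *.
  assert (E : cv a = top ⋅ cv a ⋅ top).
  { transitivity (cv (top ⋅ a ⋅ top)); [rewrite Hc, Hv; reflexivity |].
    rewrite !sconv_comp, sconv_top, scompA. reflexivity. }
  rewrite E. apply (sle_trans (sle_comp_conv_comp a)).
  apply scomp_mono; [apply scomp_monol |]; apply sle_top.
Qed.

Lemma sconv_ideal (a : S) : ideal S a -> cv a = a.
Proof.
  intro Ha. apply sle_antisym; [| apply ideal_le_sconv, Ha].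
  rewrite <- (sconvK a) at 2. apply ideal_le_sconv, ideal_sconv, Ha.
Qed.

Lemma smeet_vector_covector (a b : S) : vector S a -> covector S b -> a ⊓ b = a ⋅ b.
Proof.
  unfold vector, covector; intros Ha Hb. apply sle_antisym.
  - rewrite <- (scomp_oner a) at 1. apply (sle_trans (dedekind_l a one b)).
    apply scomp_monor. apply (sle_trans (smeet_lbr _ _)).
    rewrite <- Hb at 2. apply scomp_monol, sle_top.
  - apply smeet_glb.
    + rewrite <- Ha at 2. apply scomp_monor, sle_top.
    + rewrite <- Hb at 2. apply scomp_monol, sle_top.
Qed.

Lemma smeet_pc (x : S) : pc x ⊓ x = bot.
Proof. apply spcP, sle_refl. Qed.

Lemma ideal_spc (a : S) : ideal S a -> ideal S (pc a).
Proof.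
  intros [Hv Hc]. unfold ideal, vector, covector in *. split; apply sle_antisym.
  - apply spcP, sle_bot. apply (sle_trans (dedekind_r top (pc a) a)).
    rewrite sconv_top, Hv, smeet_pc, scomp_botl. apply sle_refl.
  - rewrite <- (scomp_oner (pc a)) at 1. apply scomp_monor, sle_top.
  - apply spcP, sle_bot. apply (sle_trans (dedekind_l top (pc a) a)).
    rewrite sconv_top, Hc, smeet_pc, scomp_botr. apply sle_refl.
  - rewrite <- (scomp_onel (pc a)) at 1. apply scomp_monol, sle_top.
Qed.

Lemma covector_sconv (p : S) : vector S p -> covector S (cv p).
Proof. unfold vector, covector; intro Hp. rewrite <- sconv_top, <- sconv_comp, Hp. reflexivity. Qed.

Lemma ideal_sconv_comp (p q : S) : vector S p -> vector S q -> ideal S (cv p ⋅ q).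
Proof.
  intros Hp Hq. split; unfold vector, covector.
  - rewrite <- scompA, Hq. reflexivity.
  - rewrite scompA, covector_sconv by exact Hp. reflexivity.
Qed.

Lemma point_sconv_comp_self (p : S) : point S p -> cv p ⋅ p = top.
Proof.
  intros [[_ Hsurj] Hvec]. apply sle_antisym; [apply sle_top |].
  destruct (ideal_sconv_comp Hvec Hvec) as [Hv Hc]. unfold vector, covector in Hv, Hc.
  rewrite <- Hv, <- Hc, <- scomp_top_top at 1. rewrite <- (scomp_oner top) at 1.
  apply scomp_monol, scomp_monor, Hsurj.
Qed.

Lemma point_le_eq (p q : S) : point S p -> point S q -> p ⊑ q -> p = q.
Proof.
  intros Hp [[Hq_inj _] Hq_vec] Hpq. apply sle_antisym; [exact Hpq |].
  rewrite <- Hq_vec, <- (point_sconv_comp_self Hp), scompA.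
  rewrite <- (scomp_onel p) at 3. apply scomp_monol.
  apply (sle_trans (scomp_monor q (sconv_mono Hpq))), Hq_inj.
Qed.

Lemma point_le_ideal_point (p q : S) :
  point S p -> ideal_point S q -> cv p ⋅ q <> bot -> p ⊑ q.
Proof.
  intros Hp [Hq Hq_ideal] Hpq. pose proof Hp as [[Hp_inj _] Hp_vec].
  apply (Hq_ideal p (cv p ⋅ q) Hp); [exact (ideal_sconv_comp Hp_vec (proj2 Hq)) | exact Hpq |].
  rewrite scompA. rewrite <- (scomp_onel q) at 2. apply scomp_monol, Hp_inj.
Qed.

Lemma bigjoin_comp_sconv_one {A} (F : A -> S) (l : list A) :
  (forall r, injective_el S (F r)) -> top = bigjoinS (map F l) ->
  bigjoinS (map (fun r => F r ⋅ cv (F r)) l) = one.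
Proof.
  intros Hinj Htop. apply sle_antisym.
  - apply bigjoin_lub. intros r _. apply Hinj.
  - rewrite <- (smeet_topl one), Htop, smeetC, smeet_bigjoinl. apply bigjoin_mono. intro r.
    rewrite smeetC. rewrite <- (scomp_oner (F r)) at 1.
    apply (sle_trans (dedekind_l (F r) one one)).
    rewrite scomp_oner. apply scomp_monor, smeet_lbr.
Qed.

Local Notation IP := (IPt S).
(* The predicate is left to inference so that it is syntactically the one of [IPt S],
   an eta-expansion of [ideal_point S]; [rewrite] needs this. *)
Local Notation pt := (@proj1_sig (carrier S) _).

Lemma ideal_point_point (p : IP) : point S (pt p).
Proof. exact (proj1 (proj2_sig p)). Qed.

Lemma ideal_points_eq_or_orthogonal (p q : IP) : p = q \/ cv (pt p) ⋅ pt q = bot.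
Proof.
  destruct (classic (cv (pt p) ⋅ pt q = bot)) as [Horth | Hpq]; [right; exact Horth | left].
  destruct p as [p Hp], q as [q Hq]; simpl in Hpq.
  apply subset_eq_compat, point_le_eq; [exact (proj1 Hp) | exact (proj1 Hq) |].
  exact (point_le_ideal_point (proj1 Hp) Hq Hpq).
Qed.

Lemma Mat_ext (X Y : Mat S) : (forall p q, X p q = Y p q) -> X = Y.
Proof.
  intro H. apply functional_extensionality; intro p.
  apply functional_extensionality; intro q. apply H.
Qed.

Lemma fmat_ideal (x : S) (p q : IP) : ideal S (fmat x p q).
Proof.
  destruct (ideal_point_point p) as [_ Hp], (ideal_point_point q) as [_ Hq].
  split; unfold fmat, vector, covector.
  - rewrite <- scompA, Hq. reflexivity.
  - rewrite !scompA, covector_sconv by exact Hp. reflexivity.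
Qed.

Lemma fmat_in_M (x : S) : in_M (fmat x).
Proof. intros p q. apply fmat_ideal. Qed.

Lemma fmat_join (x y : S) : fmat (x ⊔ y) = Mjoin (fmat x) (fmat y).
Proof.
  apply Mat_ext; intros p q. unfold fmat, Mjoin. rewrite scomp_joinDl, scomp_joinDr. reflexivity.
Qed.

Lemma fmat_meet (x y : S) : fmat (x ⊓ y) = Mmeet (fmat x) (fmat y).
Proof.
  apply Mat_ext; intros p q. unfold fmat, Mmeet.
  destruct (ideal_point_point p) as [[Hp _] _], (ideal_point_point q) as [[Hq _] _].
  rewrite scomp_meetDl_univalent, scomp_meetDr_injective by (rewrite ?sconvK; assumption).
  reflexivity.
Qed.

Lemma fmat_conv (x : S) : fmat (cv x) = Mconv (fmat x).
Proof.
  apply Mat_ext; intros p q. unfold Mconv.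
  rewrite <- (sconv_ideal (fmat_ideal x q p)). unfold fmat.
  rewrite !sconv_comp, sconvK, scompA. reflexivity.
Qed.

Lemma fmat_bot : fmat bot = @Mbot S.
Proof.
  apply Mat_ext; intros p q. unfold fmat, Mbot. rewrite scomp_botr, scomp_botl. reflexivity.
Qed.

Lemma fmat_top : fmat top = @Mtop S.
Proof.
  apply Mat_ext; intros p q. unfold fmat, Mtop. apply sle_antisym; [apply sle_top |].
  apply sle_trans with (cv (pt p) ⋅ pt p ⋅ (cv (pt q) ⋅ pt q)).
  - rewrite !point_sconv_comp_self by apply ideal_point_point.
    rewrite scomp_top_top. apply sle_refl.
  - rewrite !scompA. apply scomp_monol. rewrite <- scompA. apply scomp_monor, sle_top.
Qed.

Lemma fmat_one : fmat one = @Mone S.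
Proof.
  apply Mat_ext; intros p q. unfold fmat, Mone. rewrite scomp_oner.
  destruct (excluded_middle_informative (p = q)) as [<- | Hpq].
  - apply point_sconv_comp_self, ideal_point_point.
  - destruct (ideal_points_eq_or_orthogonal p q); [contradiction | assumption].
Qed.

Section PointAxiom.
Variable l : list IP.
Hypothesis l_complete : forall p : IP, In p l.
Hypothesis top_bigjoin : top = bigjoinS (map pt l).

Lemma bigjoin_ideal_points_one : bigjoinS (map (fun r => pt r ⋅ cv (pt r)) l) = one.
Proof.
  apply bigjoin_comp_sconv_one; [| exact top_bigjoin].
  intro r. exact (proj1 (proj1 (ideal_point_point r))).
Qed.

Lemma fmat_comp (x y : S) : fmat (x ⋅ y) = Mcomp l (fmat x) (fmat y).
Proof.
  apply Mat_ext; intros p q. unfold Mcomp.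
  transitivity (cv (pt p) ⋅ x ⋅ bigjoinS (map (fun r => pt r ⋅ cv (pt r)) l) ⋅ (y ⋅ pt q)).
  { rewrite bigjoin_ideal_points_one, scomp_oner. unfold fmat. rewrite !scompA. reflexivity. }
  rewrite scomp_bigjoinl, scomp_bigjoinr. f_equal. apply map_ext. intro r.
  rewrite (smeet_vector_covector (proj1 (fmat_ideal x p r)) (proj2 (fmat_ideal y r q))).
  unfold fmat. rewrite !scompA. reflexivity.
Qed.

Lemma gmat_fmat (x : S) : gmat l (fmat x) = x.
Proof.
  unfold gmat. rewrite bigjoin_list_prod.
  transitivity (bigjoinS (map (fun p => bigjoinS (map (fun q =>
    pt p ⋅ cv (pt p) ⋅ x ⋅ (pt q ⋅ cv (pt q))) l)) l)).
  { f_equal; apply map_ext; intro p; f_equal; apply map_ext; intro q.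
    simpl. unfold fmat. rewrite !scompA. reflexivity. }
  transitivity (bigjoinS (map (fun p => pt p ⋅ cv (pt p) ⋅ x) l)).
  { f_equal; apply map_ext; intro p.
    rewrite <- scomp_bigjoinl, bigjoin_ideal_points_one. apply scomp_oner. }
  rewrite <- scomp_bigjoinr, bigjoin_ideal_points_one. apply scomp_onel.
Qed.

Lemma fmat_inj (x y : S) : fmat x = fmat y -> x = y.
Proof. intro E. rewrite <- (gmat_fmat x), <- (gmat_fmat y), E. reflexivity. Qed.

Lemma fmat_gmat (X : Mat S) : in_M X -> fmat (gmat l X) = X.
Proof.
  intro HX. apply Mat_ext; intros p q. unfold fmat, gmat.
  rewrite scomp_bigjoinl, scomp_bigjoinr.
  destruct (HX p q) as [Hv Hc]. unfold vector, covector in Hv, Hc.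
  assert (diagonal : cv (pt p) ⋅ (pt p ⋅ X p q ⋅ cv (pt q)) ⋅ pt q = X p q).
  { rewrite !scompA, (point_sconv_comp_self (ideal_point_point p)), Hc.
    rewrite <- scompA, (point_sconv_comp_self (ideal_point_point q)), Hv. reflexivity. }
  apply sle_antisym.
  - apply bigjoin_lub. intros [r s] _. simpl.
    destruct (ideal_points_eq_or_orthogonal p r) as [<- | Hpr].
    2:{ rewrite !scompA, Hpr, !scomp_botl. apply sbot_le. }
    destruct (ideal_points_eq_or_orthogonal s q) as [<- | Hsq].
    2:{ rewrite <- !scompA, Hsq, !scomp_botr. apply sbot_le. }
    rewrite diagonal. apply sle_refl.
  - assert (Hpq : In (p, q) (list_prod l l)) by (apply in_prod; apply l_complete).
    eapply sle_trans; [| exact (bigjoin_ub _ Hpq)].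
    simpl. rewrite diagonal. apply sle_refl.
Qed.

Lemma fmat_pc (x : S) : fmat (pc x) = Mpc (fmat x).
Proof.
  assert (Ez : fmat (gmat l (Mpc (fmat x))) = Mpc (fmat x)).
  { apply fmat_gmat. intros p q. apply ideal_spc, fmat_ideal. }
  rewrite <- Ez. f_equal. apply sle_antisym.
  - unfold sle. apply fmat_inj. rewrite fmat_join, Ez. apply Mat_ext; intros p q.
    unfold Mjoin, Mpc. apply spcP.
    change (fmat (pc x) p q ⊓ fmat x p q) with (Mmeet (fmat (pc x)) (fmat x) p q).
    rewrite <- fmat_meet, smeet_pc, fmat_bot. reflexivity.
  - apply spcP, fmat_inj. rewrite fmat_meet, Ez, fmat_bot. apply Mat_ext; intros p q.
    apply smeet_pc.
Qed.

Lemma fmat_hom : StoneRA_hom (fun _ : S => True)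
  (sjoin S) (smeet S) (scomp S) (spc S) (sconv S) (sbot S) (stop S) (sone S)
  (@Mjoin S) (@Mmeet S) (Mcomp l) (@Mpc S) (@Mconv S) (@Mbot S) (@Mtop S) (@Mone S)
  (@fmat S).
Proof.
  repeat split; intros.
  - apply fmat_join.
  - apply fmat_meet.
  - apply fmat_comp.
  - apply fmat_pc.
  - apply fmat_conv.
  - apply fmat_bot.
  - apply fmat_top.
  - apply fmat_one.
Qed.

End PointAxiom.
End StoneRelationAlgebra.

Theorem mainTheorem1 (S : StoneRA) (l : list (IPt S)) :
  (* point axiom: l enumerates the (finite) set IP(S), which is non-empty,
     and top is the join of all ideal-points *)
  (forall p : IPt S, In p l) ->
  l <> [] ->
  stop S = bigjoin (sjoin S) (sbot S) (map (@proj1_sig S (@ideal_point S)) l) ->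
  (* (1) M(S) is a Stone relation algebra *)
  StoneRA_on (@in_M S) (@Mjoin S) (@Mmeet S) (Mcomp l) (@Mpc S) (@Mconv S)
             (@Mbot S) (@Mtop S) (@Mone S) /\
  (* (2) f and g are mutually inverse isomorphisms between S and M(S) *)
  (forall x : S, in_M (fmat x)) /\
  StoneRA_hom (fun _ : S => True)
    (sjoin S) (smeet S) (scomp S) (spc S) (sconv S) (sbot S) (stop S) (sone S)
    (@Mjoin S) (@Mmeet S) (Mcomp l) (@Mpc S) (@Mconv S) (@Mbot S) (@Mtop S) (@Mone S)
    (@fmat S) /\
  StoneRA_hom (@in_M S)
    (@Mjoin S) (@Mmeet S) (Mcomp l) (@Mpc S) (@Mconv S) (@Mbot S) (@Mtop S) (@Mone S)
    (sjoin S) (smeet S) (scomp S) (spc S) (sconv S) (sbot S) (stop S) (sone S)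
    (gmat l) /\
  (forall x : S, gmat l (fmat x) = x) /\
  (forall X : Mat S, in_M X -> fmat (gmat l X) = X).
Proof.
  intros l_complete _ top_bigjoin.
  pose proof (fmat_hom l_complete top_bigjoin) as f_hom.
  pose proof (gmat_fmat top_bigjoin) as gK.
  pose proof (fmat_gmat l_complete) as fK.
  split; [exact (StoneRA_on_image f_hom gK fK (@fmat_in_M S) (s_axioms S)) |].
  split; [exact (@fmat_in_M S) |].
  split; [exact f_hom |].
  split; [exact (StoneRA_hom_inverse f_hom gK fK) |].
  split; [exact gK | exact fK].
Qed.
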